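(* Let $(P,\leqslant)$ be a locally finite poset having a minimum element $\hat{0}$. Suppose that for every nonempty finite subset $S \subset P$ there exists an element $z \in S$ such that there are infinitely many $x \in P$ with $x \geqslant z$ but $x \not\geqslant y$ for every $y \in S\setminus\{z\}$. Then $P$ has the Möbius uncertainty property: whenever $f,g : P \to \mathbb{C}$ are functions, neither identically zero, satisfying \[ g(z) = \sum_{x \in P,\ x \leqslant z} f(x) \quad \text{for every } z \in P, \] at least one of $\operatorname{supp}(f) = \{x \in P : f(x)\neq 0\}$ and $\operatorname{supp}(g)=\{x\in P: g(x)\neq 0\}$ is infinite.
   Context: A poset is locally finite if every interval $\{z : x \leqslant z \leqslant y\}$ is finite; in particular the sum defining $g$ is finite. *)

From mathcomp Require Import all_boot all_order all_algebra.
From mathcomp Require Import complex.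
From mathcomp Require Import all_classical all_reals Rstruct.
From Stdlib Require Import Reals.
Set Implicit Arguments. Unset Strict Implicit. Unset Printing Implicit Defensive.
Import Order.TTheory GRing.Theory Num.Theory.
Local Open Scope classical_set_scope.
Local Open Scope ring_scope.

Definition CC : numClosedFieldType := (Rdefinitions.R)[i]%C.

Definition locally_finite {d} (P : porderType d) : Prop :=
  forall x y : P, finite_set [set z : P | (x <= z <= y)%O].

Definition has_minimum {d} (P : porderType d) : Prop :=
  exists bot : P, forall x : P, (bot <= x)%O.

Definition infinite_private_upset_condition {d} (P : porderType d) : Prop :=
  forall S : set P, finite_set S -> S !=set0 ->
    exists2 z, S z &
      infinite_set [set x : P | (z <= x)%O /\ forall y, S y -> y <> z -> ~ (y <= x)%O].

Definition supp {d} (P : porderType d) (f : P -> CC) : set P :=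
  [set x | f x <> 0].

Definition zeta_transform_rel {d} (P : porderType d) (f g : P -> CC) : Prop :=
  forall z : P, g z = \sum_(x \in [set x : P | (x <= z)%O]) f x.

Definition mobius_uncertainty {d} (P : porderType d) : Prop :=
  forall f g : P -> CC, (exists x, f x <> 0) -> (exists x, g x <> 0) ->
    zeta_transform_rel f g ->
    infinite_set (supp f) \/ infinite_set (supp g).

From mathcomp Require Import all_boot all_order all_algebra.
From mathcomp Require Import all_classical.
Local Open Scope classical_set_scope.
Local Open Scope ring_scope.

(* If supp f is finite and nonempty, apply the hypothesis to S = supp f and
   get z in supp f. For every x in the infinite set of the hypothesis, z is the
   only point of supp f below x, so g x = f z <> 0: supp g is infinite. *)

Lemma fsbig_supported_at {T : choiceType} {R : nmodType} (A : set T)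
    (F : T -> R) (z : T) :
  A z -> (forall y, A y -> y <> z -> F y = 0) -> \sum_(x \in A) F x = F z.
Proof.
move=> Az F0; rewrite -(fsbig_widen [set z]) ?fsbig_set1 //.
  by move=> _ ->.
by move=> y [Ay yz]; apply: F0.
Qed.

Definition private_upset {d} {P : porderType d} (S : set P) (z : P) : set P :=
  [set x | (z <= x)%O /\ forall y, S y -> y <> z -> ~ (y <= x)%O].

Lemma zeta_transform_private_upset {d} {P : porderType d} {f g : P -> CC}
    {z x : P} :
  zeta_transform_rel f g -> private_upset (supp f) z x -> g x = f z.
Proof.
move=> fg [zx zonly]; rewrite fg; apply: fsbig_supported_at => // y yx yz.
by apply: contrapT => fy; apply: zonly yx.
Qed.

Lemma private_upset_supp_sub_supp {d} {P : porderType d} (f g : P -> CC)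
    (z : P) :
  zeta_transform_rel f g -> supp f z -> private_upset (supp f) z `<=` supp g.
Proof.
by move=> fg fz x /(zeta_transform_private_upset fg); rewrite /supp /= => ->.
Qed.

Theorem theorem1p2 (d : Order.disp_t) (P : porderType d) :
  locally_finite P -> has_minimum P -> infinite_private_upset_condition P ->
  mobius_uncertainty P.
Proof.
move=> _ _ privP f g [x0 fx0] _ fg.
have [fin_f|] := pselect (finite_set (supp f)); last by left.
right => fin_g.
have [z fz inf_z] := privP _ fin_f (ex_intro _ x0 fx0).
apply: inf_z; apply: sub_finite_set fin_g.
exact: private_upset_supp_sub_supp fg fz.
Qed.
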